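(* Let $G$ be a connected Lie group. The map $f:H^*(G)\to T(H^*(BG)[1])$ defined by $f(U_{i_1}\cdots U_{i_j})=P_{i_1}\sqcup\!\sqcup\cdots\sqcup\!\sqcup P_{i_j}$ (in particular $f(U_i)=P_i$ and $f(U_{i_1}U_{i_2})=P_{i_1}\otimes P_{i_2}+P_{i_2}\otimes P_{i_1}$) is a map of differential graded coalgebras, and therefore a map of differential graded Hopf algebras.
   Context: Rational coefficients. $H^*(BG)$ is a polynomial algebra on even-degree generators $P_i$, and $H^*(G)$ is the exterior algebra on odd-degree primitive generators $U_i$ with $|U_i|=|P_i|-1$, with zero differential and coproduct induced by the group multiplication (an algebra map with $U_i$ primitive). $T(H^*(BG)[1])$ has the deconcatenation coproduct $\Delta(P_{i_1}\otimes\cdots\otimes P_{i_k})=\sum_jP_{i_1}\otimes\cdots\otimes P_{i_j}\bigotimes P_{i_{j+1}}\otimes\cdots\otimes P_{i_k}$, the shuffle product $\sqcup\!\sqcup$, and the bar differential $\delta$ induced by the product of $H^*(BG)$ (a derivation for the shuffle product, vanishing on each $P_i$). *)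

(* Rational (co)homology of a connected Lie group G, modelled
   through the algebraic data fixed in the paper's context:
     H^*(BG) = Q[P_0,...,P_{n-1}],  |P_i| = e i  (even, positive),
     H^*(G)  = Lambda(U_0,...,U_{n-1}), |U_i| = e i - 1 (odd), U_i primitive.
   Elements of H^*(G) are coefficient vectors on the basis
     U_S = U_{s_1} ... U_{s_k}  (S = {s_1 < ... < s_k}).
   Elements of T(H^*(BG)[1]) are coefficient functions on the basis of words
     [P^{m_1} | ... | P^{m_k}]  (letters = monomials of H^*(BG), incl. 1);
   every operator below is given by its (finite) coefficient formula. *)
From mathcomp Require Import all_boot all_order all_algebra.
Set Implicit Arguments. Unset Strict Implicit. Unset Printing Implicit Defensive.
Import Order.TTheory GRing.Theory Num.Theory.
Local Open Scope ring_scope.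

Section LieCohomology.
Variables (n : nat) (e : 'I_n -> nat). (* e i = |P_i| *)

Definition ext := {ffun {set 'I_n} -> rat}.

Definition degU (i : 'I_n) : nat := (e i).-1.

Definition ksgn (p q : nat) : rat := (-1) ^+ (p * q).

(* U_A U_B = ext_sgn A B * U_(A :|: B) for disjoint A, B *)
Definition ext_sgn (A B : {set 'I_n}) : rat :=
  \prod_(a in A) \prod_(b in B | (b < a)%N) ksgn (degU a) (degU b).

Definition ext_mul (x y : ext) : ext :=
  [ffun S : {set 'I_n} => \sum_(A : {set 'I_n} | A \subset S)
                ext_sgn A (S :\: A) * x A * y (S :\: A)].

Definition ext_one : ext := [ffun S : {set 'I_n} => (S == set0)%:R].

Definition ext_d (x : ext) : ext := [ffun => 0].

(* coproduct: the algebra map with U_i primitive; coefficient of U_A (x) U_B *)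
Definition ext_coprod (x : ext) (A B : {set 'I_n}) : rat :=
  if [disjoint A & B] then ext_sgn A B * x (A :|: B) else 0.

Definition ext_counit (x : ext) : rat := x set0.

Definition mon := {ffun 'I_n -> nat}.          (* exponent vector of P^m *)
Definition mon0 : mon := [ffun => 0%N].
Definition word := seq mon.
Definition tens := word -> rat.

Definition degP (m : mon) : nat := (\sum_i m i * e i)%N.
(* degree in the shift H^*(BG)[1] *)
Definition sdeg (m : mon) : int := (degP m)%:Z - 1.

Definition ksgnz (a b : int) : rat := (-1) ^+ (`|a| * `|b|)%N.
Definition signz (a : int) : rat := (-1) ^+ `|a|%N.

(* Koszul sign of the shuffle of the b-selected letters (left factor) with the
   others (right factor) producing w *)
Definition shuffle_sgn (w : word) (b : bitseq) : rat :=
  \prod_(q < size w) \prod_(p < q)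
     (if ~~ nth false b p && nth false b q
      then ksgnz (sdeg (nth mon0 w p)) (sdeg (nth mon0 w q)) else 1).

Definition shuffle (x y : tens) : tens := fun w =>
  \sum_(b : (size w).-tuple bool)
     shuffle_sgn w b * x (mask b w) * y (mask (map negb b) w).

Definition tens_one : tens := fun w => (w == [::])%:R.

(* deconcatenation coproduct; coefficient of u (x) v *)
Definition tens_coprod (x : tens) (u v : word) : rat := x (u ++ v).

Definition tens_counit (x : tens) : rat := x [::].

(* bar differential, dual form of
   delta [a_1|...|a_k] = sum_j (-1)^(|sa_1|+...+|sa_j|) [a_1|...|a_j a_(j+1)|...|a_k] *)
Definition mon_bound (m : mon) : nat := (\max_i m i)%N.

Definition bar_d (x : tens) : tens := fun w =>
  \sum_(j < size w)
   \sum_(t : {ffun 'I_n -> 'I_(mon_bound (nth mon0 w j)).+1}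
          | [forall i, (t i <= nth mon0 w j i)%N])
     let b : mon := [ffun i => nat_of_ord (t i)] in
     let c : mon := [ffun i => (nth mon0 w j i - t i)%N] in
     signz (\sum_(l <- rcons (take j w) b) sdeg l) *
     x (take j w ++ b :: c :: drop j.+1 w).

Definition genP (i : 'I_n) : mon := [ffun k => nat_of_bool (k == i)].
Definition tens_letter (i : 'I_n) : tens := fun w => (w == [:: genP i])%:R.

Definition fU (S : {set 'I_n}) : tens :=
  foldr shuffle tens_one [seq tens_letter i | i <- enum S].

Definition f (x : ext) : tens := fun w => \sum_(S : {set 'I_n}) x S * fU S w.

(* f (x) f applied to an element of H^*(G) (x) H^*(G) *)
Definition ftens (z : {set 'I_n} -> {set 'I_n} -> rat) (u v : word) : rat :=
  \sum_(A : {set 'I_n}) \sum_(B : {set 'I_n}) z A B * fU A u * fU B v.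

End LieCohomology.

From mathcomp Require Import all_boot all_order all_algebra.
From mathcomp Require Import ring zify.

(* Every tensor occurring here is alternating: it is supported on words in the
   generators P_i and changes sign when two adjacent letters are exchanged, the
   P_i having odd degree in H^*(BG)[1].  Such a tensor is determined by its
   coefficients on the increasing words [P_s1|...|P_sk], where f x takes the
   coefficient of U_s1...U_sk in x.  Each identity thus becomes a comparison of
   coefficients: the Koszul sign of a shuffle of odd letters is the sign of the
   corresponding product in the exterior algebra, and the sign of sorting a
   concatenation gives the coproduct.  The bar differential vanishes on
   alternating tensors, because exchanging the two factors of a splitting of a
   letter negates the corresponding term. *)

Set Implicit Arguments. Unset Strict Implicit. Unset Printing Implicit Defensive.
Import Order.TTheory GRing.Theory Num.Theory.

Fixpoint swap {T : Type} (k : nat) (s : seq T) : seq T :=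
  match k, s with
  | 0, x :: y :: t => y :: x :: t
  | k'.+1, x :: t => x :: swap k' t
  | _, _ => s
  end.

Section Swap.
Variable T : Type.
Implicit Types (s : seq T) (b : bitseq).

Lemma size_swap k s : size (swap k s) = size s.
Proof. by elim: k s => [|k IH] [|x [|y t]] //=; rewrite IH. Qed.

Lemma swapK k : involutive (@swap T k).
Proof. by elim: k => [|k IH] [|x [|y t]] //=; rewrite IH. Qed.

Lemma map_swap (U : Type) (g : T -> U) k s : map g (swap k s) = swap k (map g s).
Proof. by elim: k s => [|k IH] [|x [|y t]] //=; rewrite IH. Qed.

Lemma swap_catl k s1 s2 : k.+1 < size s1 -> swap k (s1 ++ s2) = swap k s1 ++ s2.
Proof. by elim: k s1 => [|k IH] [|x [|y t]] //= H; rewrite (IH (y :: t)). Qed.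

Lemma swap_catr k s1 s2 : swap (size s1 + k) (s1 ++ s2) = s1 ++ swap k s2.
Proof. by elim: s1 => [|x s1 IH] //=; rewrite IH. Qed.

Lemma swap_mid s1 x y s2 : swap (size s1) (s1 ++ x :: y :: s2) = s1 ++ y :: x :: s2.
Proof. by rewrite -[size s1]addn0 swap_catr. Qed.

Lemma count_swap (p : pred T) k s : count p (swap k s) = count p s.
Proof. by elim: k s => [|k IH] [|x [|y t]] //=; rewrite ?IH // addnCA. Qed.

Lemma mask_swapTT k b s : size b = size s -> k.+1 < size s ->
  nth false b k -> nth false b k.+1 ->
  exists2 j, j.+1 < size (mask b s) & mask (swap k b) (swap k s) = swap j (mask b s).
Proof.
elim: k b s => [|k IH] [|c b] [|x s] //= [Hs] Hk.
  by case: b s Hs Hk => [|c2 b] [|y s] //= [Hs] _ -> ->; exists 0.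
move=> H1 H2; have [j Hj ->] := IH b s Hs Hk H1 H2.
by case: c; [exists j.+1 | exists j].
Qed.

Lemma mask_swap k b s : size b = size s ->
  ~~ (nth false b k && nth false b k.+1) -> mask (swap k b) (swap k s) = mask b s.
Proof.
elim: k b s => [|k IH] [|c b] [|x s] //= [Hs].
  by case: b s Hs => [|c2 b] [|y s] //= [Hs]; case: c; case: c2.
by move=> H; rewrite IH.
Qed.

End Swap.

(* [(-1) ^+ bit_inv b] is the Koszul sign of the shuffle of odd letters that
   takes the letters selected by [b] to the left factor. *)
Fixpoint bit_inv (b : bitseq) : nat :=
  if b is c :: b' then (if c then 0 else count id b') + bit_inv b' else 0.

Lemma odd_bit_inv_swap k (b : bitseq) : k.+1 < size b ->
  odd (bit_inv (swap k b)) = (nth false b k != nth false b k.+1) (+) odd (bit_inv b).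
Proof.
elim: k b => [|k IH] [|c [|c2 b]] //= H.
  by case: c; case: c2; rewrite /= !add0n ?addnA ?negbK.
by rewrite oddD count_swap (IH (c2 :: b) H) [in RHS]oddD addbCA.
Qed.

Section Sort.
Variable n : nat.
Implicit Types (s t : seq 'I_n) (x y : 'I_n).

Definition ord_lt : rel 'I_n := fun x y => (x < y)%N.

Lemma ord_lt_trans : transitive ord_lt.
Proof. by move=> x y z; apply: ltn_trans. Qed.

Lemma ord_lt_irr : irreflexive ord_lt.
Proof. by move=> x; rewrite /ord_lt ltnn. Qed.

Lemma sorted_ord_ltP x t : sorted ord_lt (x :: t) -> forall y, y \in t -> (x < y)%N.
Proof. by rewrite /= (path_sortedE ord_lt_trans) => /andP [/allP]. Qed.

Lemma sorted_uniq_head x t : sorted ord_lt (x :: t) -> x \notin t.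
Proof. by move/sorted_ord_ltP=> Hx; apply/negP => /Hx; rewrite ltnn. Qed.

Lemma sorted_enum (A : {set 'I_n}) : sorted ord_lt (enum A).
Proof.
rewrite /enum_mem -enumT; apply: sorted_filter; first exact: ord_lt_trans.
change (sorted (relpre val ltn) (enum 'I_n)); rewrite -sorted_map val_enum_ord.
exact: iota_ltn_sorted.
Qed.

Lemma sorted_enum_eq s (A : {set 'I_n}) : sorted ord_lt s -> s =i A -> s = enum A.
Proof.
move=> Hs HA; apply: (irr_sorted_eq ord_lt_trans ord_lt_irr Hs (sorted_enum A)).
by move=> y; rewrite mem_enum HA.
Qed.

Fixpoint ins x t : seq 'I_n :=
  if t is y :: t' then (if (x <= y)%N then x :: t else y :: ins x t') else [:: x].

Fixpoint isort s : seq 'I_n := if s is x :: s' then ins x (isort s') else [::].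

Fixpoint cross_inv s1 s2 : nat :=
  if s1 is x :: s1' then (count (fun y => y < x)%N s2 + cross_inv s1' s2)%N else 0%N.

Fixpoint inversions s : nat :=
  if s is x :: s' then (cross_inv [:: x] s' + inversions s')%N else 0%N.

Lemma perm_ins x t : perm_eq (ins x t) (x :: t).
Proof.
elim: t => [|y t IH] //=; case: ifP => _ //.
rewrite -(perm_cons y) in IH; apply: (perm_trans IH).
by rewrite -[y :: x :: t]/([:: y] ++ [:: x] ++ t) perm_catCA.
Qed.

Lemma perm_isort s : perm_eq (isort s) s.
Proof.
by elim: s => [|x s IH] //=; apply: (perm_trans (perm_ins _ _)); rewrite perm_cons.
Qed.

Lemma sorted_ins x t : sorted ord_lt t -> x \notin t -> sorted ord_lt (ins x t).
Proof.
elim: t => [|y t IH] //= Hs; rewrite inE negb_or => /andP [Hxy Hxt].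
have Hy := sorted_ord_ltP Hs.
case: ifP => Hle.
  by rewrite /= Hs andbT /ord_lt ltn_neqAle Hle andbT.
rewrite /= (path_sortedE ord_lt_trans) IH ?(path_sorted Hs) // andbT.
apply/allP => z; rewrite (perm_mem (perm_ins x t)) inE => /orP [/eqP -> | /Hy //].
by rewrite /ord_lt ltnNge Hle.
Qed.

Lemma sorted_isort s : uniq s -> sorted ord_lt (isort s).
Proof.
elim: s => [|x s IH] //= /andP [Hx Hu]; apply: sorted_ins; first exact: IH.
by rewrite (perm_mem (perm_isort s)).
Qed.

Lemma isort_uniq s : uniq s -> isort s = enum [set x in s].
Proof.
move=> Hu; apply: sorted_enum_eq; first exact: sorted_isort.
by move=> x; rewrite (perm_mem (perm_isort s)) inE.
Qed.

Lemma cross_inv_cons_r x s1 s2 : (forall y, y \in s1 -> (x < y)%N) ->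
  cross_inv s1 (x :: s2) = (size s1 + cross_inv s1 s2)%N.
Proof.
elim: s1 => [|y s1 IH] //= H.
rewrite IH => [|z Hz]; last by apply: H; rewrite inE Hz orbT.
rewrite H ?mem_head //=; lia.
Qed.

Lemma inversions_cat s1 s2 :
  inversions (s1 ++ s2) = (inversions s1 + inversions s2 + cross_inv s1 s2)%N.
Proof. elim: s1 => [|x s1 IH] /=; rewrite ?addn0 // count_cat IH; lia. Qed.

Lemma count_lt_sorted x y t : (x <= y)%N -> sorted ord_lt (y :: t) ->
  count (fun z : 'I_n => z < x)%N t = 0%N.
Proof.
move=> Hxy /sorted_ord_ltP Hy; apply/eqP; rewrite -leqn0 leqNgt -has_count.
by apply/hasPn => z /Hy Hyz; rewrite -leqNgt (leq_trans Hxy (ltnW Hyz)).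
Qed.

Lemma inversions_sorted s : sorted ord_lt s -> inversions s = 0%N.
Proof.
elim: s => [|x s IH] //= Hs.
by rewrite IH ?(path_sorted Hs) // (count_lt_sorted (leqnn x) Hs).
Qed.

Lemma bit_inv_cross r (b : bitseq) : sorted ord_lt r -> size b = size r ->
  bit_inv b = cross_inv (mask b r) (mask (map negb b) r).
Proof.
elim: r b => [|x r IH] [|c b] //= Hs [Hb].
have Hx := sorted_ord_ltP Hs; rewrite (IH b) ?(path_sorted Hs) //.
case: c => /=; last by rewrite cross_inv_cons_r ?size_mask // => y /mem_mask /Hx.
have Hs' : sorted ord_lt (x :: r) := Hs.
by rewrite (count_lt_sorted (leqnn x) (sorted_mask ord_lt_trans (true :: map negb b) Hs')).
Qed.

Lemma mask_enum (A : {set 'I_n}) (b : bitseq) :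
  mask b (enum A) = enum [set x in mask b (enum A)].
Proof.
apply: sorted_enum_eq; last by move=> x; rewrite inE.
exact: (sorted_mask ord_lt_trans _ (sorted_enum A)).
Qed.

Lemma mask_negb_uniq s (b : bitseq) x : uniq s -> size b = size s ->
  (x \in mask (map negb b) s) = (x \in s) && (x \notin mask b s).
Proof.
elim: s b => [|y s IH] [|c b] //= /andP [Hy Hu] [Hb].
have [->|Nxy] := eqVneq x y; last by case: c; rewrite /= !inE (negbTE Nxy) /= IH.
have Hm m : (y \in mask m s) = false by apply/negbTE; apply: contra Hy; apply: mem_mask.
by case: c; rewrite /= ?inE ?eqxx ?Hm.
Qed.

Lemma mask_negb_enum (A : {set 'I_n}) (b : bitseq) : size b = size (enum A) ->
  mask (map negb b) (enum A) = enum (A :\: [set x in mask b (enum A)]).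
Proof.
move=> Hb; apply: sorted_enum_eq.
  exact: (sorted_mask ord_lt_trans _ (sorted_enum A)).
by move=> x; rewrite !inE mask_negb_uniq ?enum_uniq // mem_enum andbC.
Qed.

Lemma mask_mem_uniq s (b : bitseq) : uniq s -> size b = size s ->
  map (fun x => x \in mask b s) s = b.
Proof.
elim: s b => [|y s IH] [|c b] //= /andP [Hy Hu] [Hb].
have Hm m : (y \in mask m s) = false by apply/negbTE; apply: contra Hy; apply: mem_mask.
congr (_ :: _); first by case: c; rewrite /= ?inE ?eqxx ?Hm.
rewrite -[RHS](IH b) //; apply/eq_in_map => x Hx.
by case: c => //=; rewrite inE; case: eqP => // Exy; rewrite -Exy Hx in Hy.
Qed.

End Sort.

Local Open Scope ring_scope.

Section SwapAlternating.
Variables (R : numDomainType) (n : nat).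
Implicit Types (psi : seq 'I_n -> R) (s t : seq 'I_n) (x y : 'I_n).

Definition swap_alternating psi :=
  forall k s, (k.+1 < size s)%N -> psi (swap k s) = - psi s.

Lemma swap_alternating_cat psi s0 :
  swap_alternating psi -> swap_alternating (fun t => psi (s0 ++ t)).
Proof.
by move=> H k s Hk /=; rewrite -swap_catr H // size_cat -addnS ltn_add2l.
Qed.

Lemma swap_alternating0 psi x y t :
  swap_alternating psi -> psi (x :: y :: t) = - psi (y :: x :: t).
Proof. by move=> H; rewrite -(H 0%N (y :: x :: t)). Qed.

Lemma swap_alternating_ins psi x t : swap_alternating psi -> sorted (@ord_lt n) t ->
  psi (x :: t) = (-1) ^+ count (fun y => y < x)%N t * psi (ins x t).
Proof.
elim: t psi => [|y t IH] psi Hpsi Hs /=; first by rewrite mul1r.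
case: ifP => Hle.
  by rewrite ltnNge Hle /= add0n (count_lt_sorted Hle Hs) mul1r.
rewrite (swap_alternating0 _ _ _ Hpsi).
rewrite (IH (fun u => psi (y :: u))) ?(path_sorted Hs) //; last first.
  exact: (swap_alternating_cat [:: y]).
by rewrite ltnNge Hle /= add1n exprS mulN1r mulNr.
Qed.

Lemma swap_alternating_dup psi x t : swap_alternating psi -> sorted (@ord_lt n) t ->
  x \in t -> psi (x :: t) = 0.
Proof.
elim: t psi => [|y t IH] psi Hpsi Hs //; rewrite inE.
have [-> _|Nxy /= Hx] := eqVneq x y.
  by move: (swap_alternating0 y y t Hpsi) => /esym/eqP; rewrite eqNr => /eqP.
rewrite (swap_alternating0 _ _ _ Hpsi) (IH (fun u => psi (y :: u))) ?oppr0 //.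
  exact: (swap_alternating_cat [:: y]).
exact: path_sorted Hs.
Qed.

Lemma swap_alternating_isort psi s : swap_alternating psi -> uniq s ->
  psi s = (-1) ^+ inversions s * psi (isort s).
Proof.
elim: s psi => [|x s IH] psi Hpsi /=; first by rewrite mul1r.
case/andP => Hx Hu.
rewrite (IH (fun u => psi (x :: u))) //; last exact: (swap_alternating_cat [:: x]).
rewrite (swap_alternating_ins _ Hpsi) ?sorted_isort // addn0.
by rewrite ((permP (perm_isort s)) (fun y => y < x)%N) exprD mulrA [_ * (-1) ^+ _]mulrC.
Qed.

Lemma swap_alternating_enum psi s : swap_alternating psi -> uniq s ->
  psi s = (-1) ^+ inversions s * psi (enum [set x in s]).
Proof. by move=> Hpsi Hu; rewrite -isort_uniq // swap_alternating_isort. Qed.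

Lemma swap_alternating_not_uniq psi s : swap_alternating psi -> ~~ uniq s -> psi s = 0.
Proof.
elim: s psi => [|x s IH] psi Hpsi //=.
have Hxpsi := swap_alternating_cat [:: x] Hpsi.
rewrite negb_and negbK; have [Hu|Hu] := boolP (uniq s); last first.
  by rewrite orbT => _; exact: (IH _ Hxpsi).
rewrite orbF => Hx; rewrite (swap_alternating_isort Hxpsi Hu) /=.
by rewrite (swap_alternating_dup Hpsi) ?mulr0 ?sorted_isort ?(perm_mem (perm_isort s)).
Qed.

Lemma swap_alternating_eq psi phi : swap_alternating psi -> swap_alternating phi ->
  (forall A : {set 'I_n}, psi (enum A) = phi (enum A)) -> psi =1 phi.
Proof.
move=> Hpsi Hphi H s; have [Hu|Hu] := boolP (uniq s).
  by rewrite (swap_alternating_enum Hpsi) // (swap_alternating_enum Hphi) // H.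
by rewrite !swap_alternating_not_uniq.
Qed.

End SwapAlternating.

Lemma sum_sign_reversing (R : numDomainType) (I : finType) (P : pred I) (F : I -> R)
    (g : I -> I) : involutive g -> (forall i, P (g i) = P i) ->
  (forall i, P i -> F (g i) = - F i) -> \sum_(i | P i) F i = 0.
Proof.
move=> gK Pg Fg; apply/eqP; rewrite -eqNr -sumrN; apply/eqP.
rewrite (reindex_inj (inv_inj gK)) /=.
by apply: eq_big => i; rewrite Pg // => /Fg ->; rewrite opprK.
Qed.

Lemma m1_odd (R : ringType) (k : nat) : odd k -> (-1 : R) ^+ k = -1.
Proof. by move=> Hk; rewrite -signr_odd Hk expr1. Qed.

Section Generators.
Variables (n : nat) (e : 'I_n -> nat).
Hypothesis he : forall i, (0 < e i)%N && ~~ odd (e i).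

Lemma genP_inj : injective (@genP n).
Proof.
move=> i j /(congr1 (fun m : mon n => m i)); rewrite !ffunE eqxx.
by case: eqP.
Qed.

Lemma odd_degU i : odd (degU e i).
Proof. by have /andP [] := he i; rewrite /degU; case: (e i) => //= k _; rewrite negbK. Qed.

Lemma sdeg_genP i : sdeg e (genP i) = (degU e i)%:Z.
Proof.
rewrite /sdeg /degP (bigD1 i) //= big1 => [|j /negbTE Hj]; last by rewrite ffunE Hj.
have /andP [+ _] := he i.
by rewrite ffunE eqxx mul1n addn0 /degU; case: (e i) => // k _; rewrite intS addrC addKr.
Qed.

Lemma ksgn_degU i j : ksgn (degU e i) (degU e j) = -1.
Proof. by rewrite /ksgn m1_odd // oddM !odd_degU. Qed.

Lemma ksgnz_genP i j : ksgnz (sdeg e (genP i)) (sdeg e (genP j)) = -1.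
Proof. by rewrite /ksgnz !sdeg_genP !absz_nat; apply: ksgn_degU. Qed.

Lemma signz_add_genP (a : int) i : signz (a + sdeg e (genP i)) = - signz a.
Proof.
have signzE (z : int) : signz z = (-1 : rat) ^ z.
  by case: z => // k; rewrite [RHS]/exprz invr_sign.
rewrite !signzE expfzDr ?oppr_eq0 ?oner_eq0 // sdeg_genP.
by rewrite [(-1) ^ Posz _]/(exprz _ _) /= m1_odd ?odd_degU // mulrN1.
Qed.

End Generators.

Section AlternatingTensors.
Variable n : nat.

Definition gword (s : seq 'I_n) : word n := map (@genP n) s.

Definition is_gen (m : mon n) : bool := [exists i, m == genP i].

(* Tensors in the span of the words on the generators P_i, antisymmetric under
   transposition of adjacent letters (the letters P_i have odd degree in
   H^*(BG)[1]). *)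
Definition alternating (x : tens n) :=
  (forall w, ~~ all is_gen w -> x w = 0) /\ swap_alternating (fun s => x (gword s)).

Lemma all_is_genP (w : word n) : all is_gen w -> exists s, w = gword s.
Proof.
elim: w => [|m w IH] /=; first by exists [::].
by case/andP => /existsP [i /eqP ->] /IH [s ->]; exists (i :: s).
Qed.

Lemma alternating_eq x y : alternating x -> alternating y ->
  (forall A : {set 'I_n}, x (gword (enum A)) = y (gword (enum A))) -> x =1 y.
Proof.
move=> [Hx0 Hx] [Hy0 Hy] H w.
have [/all_is_genP [s ->] | Hw] := boolP (all is_gen w); last by rewrite Hx0 ?Hy0.
exact: (swap_alternating_eq Hx Hy).
Qed.

Lemma alternating_catr x v : alternating x -> alternating (fun u => x (u ++ v)).
Proof.
move=> [Hx0 Hx]; split=> [u Hu | k s Hk /=]; first by rewrite Hx0 // all_cat negb_and Hu.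
have [/all_is_genP [t ->] | Hv] := boolP (all is_gen v); last first.
  by rewrite !Hx0 ?oppr0 // all_cat negb_and Hv orbT.
rewrite /gword -!map_cat -swap_catl //; apply: (Hx k (s ++ t)).
by rewrite size_cat (leq_trans Hk (leq_addr _ _)).
Qed.

Lemma alternating_catl x s0 : alternating x -> alternating (fun v => x (gword s0 ++ v)).
Proof.
move=> [Hx0 Hx]; split=> [v Hv | ]; first by rewrite Hx0 // all_cat negb_and Hv orbT.
by move=> k t Hk; rewrite /gword -!map_cat; apply: (swap_alternating_cat s0 Hx).
Qed.

Lemma alternating_mask_swap x k (b : bitseq) s : alternating x ->
  size b = size s -> (k.+1 < size s)%N ->
  x (gword (mask (swap k b) (swap k s))) =
  (-1) ^+ (nth false b k && nth false b k.+1) * x (gword (mask b s)).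
Proof.
move=> [_ Hx] Hb Hk; case: (boolP (_ && _)) => [/andP [H1 H2] | H].
  have [j Hj ->] := mask_swapTT Hb Hk H1 H2.
  by rewrite (Hx j) // expr1 mulN1r.
by rewrite mask_swap // mul1r.
Qed.

Lemma alternating_sum (I : finType) (F : I -> tens n) :
  (forall i, alternating (F i)) -> alternating (fun w => \sum_i F i w).
Proof.
move=> HF; split=> [w Hw | k s Hk /=]; first by rewrite big1 // => i _; rewrite (HF i).1.
by rewrite -sumrN; apply: eq_bigr => i _; rewrite (HF i).2.
Qed.

Lemma alternating_scalel c x : alternating x -> alternating (fun w => c * x w).
Proof.
by case=> Hx0 Hx; split=> [w /Hx0 -> | k s /Hx /= ->]; rewrite ?mulr0 ?mulrN.
Qed.

Lemma alternating_scaler c x : alternating x -> alternating (fun w => x w * c).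
Proof.
by case=> Hx0 Hx; split=> [w /Hx0 -> | k s /Hx /= ->]; rewrite ?mul0r ?mulNr.
Qed.

End AlternatingTensors.
Arguments is_gen {n} m.

Lemma all_mask_negb (T : Type) (P : pred T) (b : bitseq) (w : seq T) :
  size b = size w -> all P (mask b w) -> all P (mask (map negb b) w) -> all P w.
Proof.
elim: w b => [|m w IH] [|c b] //= [Hs].
by case: c => /=; [case/andP => -> H1 H2 | move=> H1 /andP [-> H2]]; apply: (IH b).
Qed.

Lemma sign_bit_inv_swap (R : ringType) k (b : bitseq) : (k.+1 < size b)%N ->
  (-1 : R) ^+ bit_inv (swap k b) =
  (-1) ^+ (nth false b k != nth false b k.+1) * (-1) ^+ bit_inv b.
Proof.
move=> Hk; rewrite -[LHS]signr_odd odd_bit_inv_swap // signr_addb signr_odd.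
by case: (_ != _).
Qed.

Lemma size_swap_tuple N k (b : N.-tuple bool) : size (swap k b) == N.
Proof. by rewrite size_swap size_tuple. Qed.

Definition swap_tuple N k (b : N.-tuple bool) : N.-tuple bool := Tuple (size_swap_tuple k b).

Lemma swap_tupleK N k : involutive (@swap_tuple N k).
Proof. by move=> b; apply: val_inj; rewrite /= swapK. Qed.

Section Shuffle.
Variables (n : nat) (e : 'I_n -> nat).
Hypothesis he : forall i, (0 < e i)%N && ~~ odd (e i).

Lemma shuffle_sgn_cons a (w : word n) c (b : bitseq) :
  shuffle_sgn e (a :: w) (c :: b) =
  \prod_(j < size w) (if ~~ c && nth false b j
                      then ksgnz (sdeg e a) (sdeg e (nth (mon0 n) w j)) else 1)
  * shuffle_sgn e w b.
Proof.
rewrite /shuffle_sgn /= big_ord_recl big_ord0 mul1r -big_split /=.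
by apply: eq_bigr => j _; rewrite big_ord_recl.
Qed.

Lemma prod_sign_bits (R : ringType) (b : bitseq) :
  \prod_(j < size b) (if nth false b j then -1 else 1) = (-1 : R) ^+ count id b.
Proof.
elim: b => [|c b IH]; first by rewrite big_ord0.
by rewrite big_ord_recl /= IH exprD; case: c; rewrite ?mul1r.
Qed.

Lemma shuffle_sgn_gword (s : seq 'I_n) (b : bitseq) : size b = size s ->
  shuffle_sgn e (gword s) b = (-1) ^+ bit_inv b.
Proof.
elim: s b => [|i s IH] [|c b] //= => [_|[Hs]]; first by rewrite /shuffle_sgn big_ord0.
rewrite shuffle_sgn_cons IH // exprD; congr (_ * _).
case: c => /=; first by rewrite big1.
rewrite -prod_sign_bits size_map -Hs; apply: eq_bigr => j _.
by rewrite (nth_map i) ?ksgnz_genP // -Hs.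
Qed.

Lemma shuffle_gword N x y s : size s = N ->
  shuffle e x y (gword s) = \sum_(b : N.-tuple bool)
    (-1) ^+ bit_inv b * x (gword (mask b s)) * y (gword (mask (map negb b) s)).
Proof.
rewrite /shuffle size_map => <-; apply: eq_bigr => b _.
by rewrite shuffle_sgn_gword ?size_tuple // -!map_mask.
Qed.

Lemma alternating_shuffle x y :
  alternating x -> alternating y -> alternating (shuffle e x y).
Proof.
move=> Hx Hy; split=> [w Hw | k s Hk /=].
  rewrite /shuffle big1 // => b _.
  have [H1|H1] := boolP (all is_gen (mask b w)); last by rewrite Hx.1 ?mulr0 ?mul0r.
  have [H2|H2] := boolP (all is_gen (mask (map negb b) w)); last by rewrite Hy.1 ?mulr0.
  by move: Hw; rewrite (all_mask_negb (size_tuple b) H1 H2).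
rewrite (shuffle_gword (N := size s)) ?size_swap // (shuffle_gword (N := size s)) //.
rewrite (reindex_inj (inv_inj (@swap_tupleK _ k))) -sumrN; apply: eq_bigr => b _ /=.
have Hb : size b = size s by rewrite size_tuple.
have Hnb : size (map negb b) = size s by rewrite size_map.
rewrite sign_bit_inv_swap ?Hb // (alternating_mask_swap Hx) // map_swap.
rewrite (alternating_mask_swap Hy) // !(nth_map false) ?Hb ?(ltnW Hk) //.
by case: (nth false b k); case: (nth false b k.+1) => /=; ring.
Qed.

Lemma ext_sgn_cross A B : ext_sgn e A B = (-1) ^+ cross_inv (enum A) (enum B).
Proof.
have cross_sum s1 s2 :
    cross_inv s1 s2 = (\sum_(x <- s1) count (fun y : 'I_n => y < x)%N s2)%N.
  by elim: s1 => [|x s1 IH]; rewrite ?big_nil ?big_cons //= IH.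
rewrite /ext_sgn cross_sum -prodrXr -big_enum; apply: eq_bigr => a _.
rewrite -big_enum_cond (eq_bigr (fun=> -1)) => [|b _]; last exact: ksgn_degU.
by rewrite big_const_seq iter_mulr_1.
Qed.

Lemma shuffle_enum x y (T : {set 'I_n}) :
  shuffle e x y (gword (enum T)) = \sum_(A : {set 'I_n} | A \subset T)
     ext_sgn e A (T :\: A) * x (gword (enum A)) * y (gword (enum (T :\: A))).
Proof.
rewrite (shuffle_gword (N := size (enum T))) //.
pose of_bits (b : (size (enum T)).-tuple bool) := [set z in mask b (enum T)].
pose to_bits (A : {set 'I_n}) := map_tuple (fun z => z \in A) (in_tuple (enum T)).
rewrite (reindex of_bits) /=; last first.
  exists to_bits => [b _ | A].
    apply: val_inj; rewrite /= -[RHS](mask_mem_uniq (enum_uniq (mem T))) ?size_tuple //.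
    by apply: eq_map => z; rewrite inE.
  rewrite inE => HA; apply/setP => z.
  rewrite inE -filter_mask mem_filter mem_enum.
  by case Hz: (z \in A) => //=; apply: (subsetP HA).
rewrite [RHS](eq_bigl xpredT) => [|b]; last first.
  by apply/subsetP => z; rewrite inE => /mem_mask; rewrite mem_enum.
apply: eq_bigr => b _; have Hb : size b = size (enum T) by rewrite size_tuple.
rewrite ext_sgn_cross -mask_enum -mask_negb_enum //.
by rewrite -(bit_inv_cross (sorted_enum T) Hb).
Qed.

End Shuffle.

Lemma eq_set_cons (T : finType) (A : {set T}) x r : x \notin r ->
  (A == [set z in x :: r]) = (x \in A) && (A :\ x == [set z in r]).
Proof.
move=> Hx; apply/eqP/andP => [-> | [HxA /eqP HA]].
  split; first by rewrite inE mem_head.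
  by apply/eqP/setP => z; rewrite !inE; case: eqP => [-> | ]; rewrite ?(negbTE Hx).
apply/setP => z; move/setP: HA => /(_ z); rewrite !inE => <-.
by case: eqP => [-> |].
Qed.

Section ShuffleLetters.
Variables (n : nat) (e : 'I_n -> nat).
Hypothesis he : forall i, (0 < e i)%N && ~~ odd (e i).
Implicit Types (i : 'I_n) (A T : {set 'I_n}).

Lemma alternating_letter i : alternating (tens_letter i).
Proof.
split=> [w | k s Hk /=]; rewrite /tens_letter.
  by case: eqP => // -> /=; rewrite andbT => /existsP []; exists i.
have long s' : (1 < size s')%N -> (gword s' == [:: genP i]) = false.
  by move=> Hs'; apply: contraTF Hs' => /eqP /(congr1 size); rewrite size_map => ->.
by rewrite !long ?oppr0 ?size_swap // (leq_ltn_trans _ Hk).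
Qed.

Lemma alternating_one : alternating (@tens_one n).
Proof.
split=> [w | k s Hk /=]; rewrite /tens_one; first by case: eqP => // ->.
have nonempty s' : (0 < size s')%N -> (gword s' == [::]) = false.
  by move=> Hs'; apply: contraTF Hs' => /eqP /(congr1 size); rewrite size_map => ->.
by rewrite !nonempty ?oppr0 ?size_swap // (leq_ltn_trans _ Hk).
Qed.

Lemma tens_one_enum T : tens_one (gword (enum T)) = (T == set0)%:R.
Proof. by rewrite /tens_one -size_eq0 size_map -cardE cards_eq0. Qed.

Definition shuffle_letters (r : seq 'I_n) : tens n :=
  foldr (shuffle e) (@tens_one n) (map (@tens_letter n) r).

Lemma alternating_shuffle_letters r : alternating (shuffle_letters r).
Proof.
elim: r => [|i r IH]; first exact: alternating_one.
exact: (alternating_shuffle he (alternating_letter i) IH).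
Qed.

Lemma gword_enum_eq1 i A : (gword (enum A) == [:: genP i]) = (A == [set i]).
Proof.
apply/eqP/eqP => [E | ->]; last by rewrite enum_set1.
have E' : enum A = [:: i] by move: E; case: (enum A) => [|a [|a' s]] // [/genP_inj ->].
by apply/setP => z; rewrite -mem_enum E' !inE.
Qed.

Lemma tens_letter_enum i A : tens_letter i (gword (enum A)) = (A == [set i])%:R.
Proof. by rewrite /tens_letter gword_enum_eq1. Qed.

Lemma shuffle_letter_enum i y (T : {set 'I_n}) :
  shuffle e (tens_letter i) y (gword (enum T)) =
  (i \in T)%:R * ext_sgn e [set i] (T :\ i) * y (gword (enum (T :\ i))).
Proof.
rewrite shuffle_enum //; have [HiT|HiT] := boolP (i \in T); last first.
  rewrite big1 ?mul0r // => A HA; rewrite tens_letter_enum.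
  by case: eqP HA => [-> | _]; rewrite ?sub1set ?(negbTE HiT) // mulr0 mul0r.
rewrite (bigD1 [set i]) ?sub1set //= big1 => [|A /andP [_ /negbTE HA]]; last first.
  by rewrite tens_letter_enum HA mulr0 mul0r.
by rewrite tens_letter_enum eqxx !mulr1 mul1r addr0.
Qed.

Lemma shuffle_letters_enum r (T : {set 'I_n}) : sorted (@ord_lt n) r ->
  shuffle_letters r (gword (enum T)) = (T == [set z in r])%:R.
Proof.
elim: r T => [|i r IH] T Hs.
  have -> : [set z in [::]] = set0 :> {set 'I_n} by apply/setP => z; rewrite !inE.
  exact: tens_one_enum.
have Hi := sorted_ord_ltP Hs.
rewrite /shuffle_letters /= -/(shuffle_letters r) shuffle_letter_enum IH ?(path_sorted Hs) //.
rewrite (eq_set_cons _ (sorted_uniq_head Hs)).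
case: (i \in T) (T :\ i =P [set z in r]) => [[->|_]|_] /=; rewrite ?mulr0 ?mul0r //.
rewrite /ext_sgn big_set1 big1 ?mul1r // => j.
by rewrite inE => /andP [/Hi Hij Hji]; move: (ltn_trans Hij Hji); rewrite ltnn.
Qed.

End ShuffleLetters.

Lemma sumr_mul_delta (R : ringType) (I : finType) (F : I -> R) j :
  \sum_i F i * (i == j)%:R = F j.
Proof.
by rewrite (eq_bigr (fun i => if i == j then F i else 0)) => [|i _];
  rewrite ?mulr_natr ?mulrb // -big_mkcond big_pred1_eq.
Qed.

Section MapF.
Variables (n : nat) (e : 'I_n -> nat).
Hypothesis he : forall i, (0 < e i)%N && ~~ odd (e i).
Implicit Types (A B S T : {set 'I_n}) (x : ext n).

Lemma fUE S : fU e S = shuffle_letters e (enum S).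
Proof. by []. Qed.

Lemma fU_enum S T : fU e S (gword (enum T)) = (S == T)%:R.
Proof.
rewrite fUE (shuffle_letters_enum he) ?sorted_enum //.
have -> : [set z in enum S] = S by apply/setP => z; rewrite inE mem_enum.
by rewrite eq_sym.
Qed.

Lemma alternating_fU S : alternating (fU e S).
Proof. by rewrite fUE; apply: alternating_shuffle_letters. Qed.

Lemma alternating_f x : alternating (f e x).
Proof. by apply: alternating_sum => S; apply: alternating_scalel; apply: alternating_fU. Qed.

Lemma f_enum x T : f e x (gword (enum T)) = x T.
Proof. by rewrite /f (eq_bigr _ (fun S _ => congr1 _ (fU_enum S T))) sumr_mul_delta. Qed.

Lemma tens_counit_f x : tens_counit (f e x) = ext_counit x.
Proof. by rewrite /tens_counit /ext_counit -(f_enum x set0) enum_set0. Qed.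

Lemma f_ext_one w : f e (ext_one n) w = tens_one w.
Proof.
apply: (alternating_eq (alternating_f _) (alternating_one n)) => T.
by rewrite f_enum ffunE tens_one_enum.
Qed.

Lemma f_ext_mul x y w : f e (ext_mul e x y) w = shuffle e (f e x) (f e y) w.
Proof.
have Hxy := alternating_shuffle he (alternating_f x) (alternating_f y).
apply: (alternating_eq (alternating_f _) Hxy) => T.
by rewrite f_enum ffunE (shuffle_enum he); apply: eq_bigr => A _; rewrite !f_enum.
Qed.

Definition bar_term (phi : tens n) (P Q : word n) (b c : mon n) : rat :=
  signz (\sum_(l <- rcons P b) sdeg e l) * phi (P ++ b :: c :: Q).

Lemma bar_term_swap phi P Q b c :
  alternating phi -> bar_term phi P Q c b = - bar_term phi P Q b c.
Proof.
case=> Hphi0 Hphi; rewrite /bar_term !big_rcons.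
have [Hw|Hw] := boolP (all is_gen (P ++ b :: c :: Q)); last first.
  rewrite !Hphi0 ?mulr0 ?oppr0 //; apply: contra Hw.
  by rewrite !all_cat /=; case: (is_gen b); case: (is_gen c); rewrite ?andbF.
have [s Es] := all_is_genP Hw.
move: Hw; rewrite all_cat /= => /and3P [_ /existsP [i /eqP Hb] /andP [/existsP [j /eqP Hc] _]].
have Hsize : ((size P).+1 < size s)%N.
  by rewrite -(size_map (@genP n)) -[map _ _]/(gword s) -Es size_cat /=; lia.
rewrite -swap_mid Es /gword -map_swap (Hphi _ _ Hsize) -/(gword s) -Es Hb Hc.
by rewrite !signz_add_genP // mulrN.
Qed.

Lemma bar_splittings_eq0 phi P Q (m : mon n) : alternating phi ->
  \sum_(t : {ffun 'I_n -> 'I_(mon_bound m).+1} | [forall i, (t i <= m i)%N])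
    bar_term phi P Q [ffun i => nat_of_ord (t i)] [ffun i => (m i - t i)%N] = 0.
Proof.
move=> Hphi; set M := mon_bound m.
have ltM i k : (m i - k < M.+1)%N.
  by rewrite ltnS (leq_trans (leq_subr _ _)) // (@leq_bigmax _ (fun i => m i)).
(* the involution exchanging the two factors of a splitting m = b + c *)
pose compl (t : {ffun 'I_n -> 'I_M.+1}) : {ffun 'I_n -> 'I_M.+1} :=
  [ffun i => if (t i <= m i)%N then inord (m i - t i) else t i].
have complE (t : {ffun 'I_n -> 'I_M.+1}) i :
    (t i <= m i)%N -> nat_of_ord (compl t i) = (m i - t i)%N.
  by move=> Hi; rewrite ffunE Hi inordK.
apply: (sum_sign_reversing (g := compl)) => [t | t | t /forallP Ht].
- apply/ffunP => i; have [Hi|/ltn_geF Hi] := leqP (t i) (m i).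
    have Hc : (compl t i <= m i)%N by rewrite complE ?leq_subr.
    by apply: ord_inj; rewrite (complE _ _ Hc) complE // subKn.
  by rewrite !ffunE Hi Hi.
- apply: eq_forallb => i; have [Hi|/ltn_geF Hi] := leqP (t i) (m i).
    by rewrite complE ?leq_subr.
  by rewrite ffunE Hi Hi.
have -> : [ffun i => nat_of_ord (compl t i)] = [ffun i => (m i - t i)%N] :> mon n.
  by apply/ffunP => i; rewrite [LHS]ffunE [RHS]ffunE complE.
have -> : [ffun i => (m i - compl t i)%N] = [ffun i => nat_of_ord (t i)] :> mon n.
  by apply/ffunP => i; rewrite [LHS]ffunE [RHS]ffunE complE // subKn.
exact: bar_term_swap.
Qed.

Lemma bar_d_f x w : bar_d e (f e x) w = f e (ext_d x) w.
Proof.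
have -> : f e (ext_d x) w = 0 by rewrite /f big1 // => S _; rewrite ffunE mul0r.
by rewrite /bar_d big1 // => j _; apply: bar_splittings_eq0; apply: alternating_f.
Qed.

Lemma ftens_enum z T T' : ftens e z (gword (enum T)) (gword (enum T')) = z T T'.
Proof.
rewrite /ftens (eq_bigr (fun A => z A T' * (A == T)%:R)) ?sumr_mul_delta // => A _.
rewrite (eq_bigr (fun B => z A B * (A == T)%:R * (B == T')%:R)) => [|B _].
  by rewrite sumr_mul_delta.
by rewrite !fU_enum.
Qed.

Lemma alternating_ftensl z v : alternating (fun u => ftens e z u v).
Proof.
apply: alternating_sum => A; apply: alternating_sum => B.
by apply: alternating_scaler; apply: alternating_scalel; apply: alternating_fU.
Qed.

Lemma alternating_ftensr z u : alternating (fun v => ftens e z u v).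
Proof.
apply: alternating_sum => A; apply: alternating_sum => B.
by apply: alternating_scalel; apply: alternating_fU.
Qed.

Lemma uniq_enum_cat A B : uniq (enum A ++ enum B) = [disjoint A & B].
Proof.
rewrite cat_uniq !enum_uniq andbT /= disjoint_sym disjoint_subset.
apply/hasPn/subsetP => H z; rewrite ?mem_enum => Hz.
  by rewrite inE -mem_enum H ?mem_enum.
by have := H z Hz; rewrite inE.
Qed.

Lemma f_enum_cat x A B : f e x (gword (enum A ++ enum B)) = ext_coprod e x A B.
Proof.
have Hx := (alternating_f x).2; rewrite /ext_coprod -uniq_enum_cat.
case: ifP => Hu; last by rewrite (swap_alternating_not_uniq Hx) ?Hu.
rewrite (swap_alternating_enum Hx Hu) f_enum inversions_cat !inversions_sorted ?sorted_enum //.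
rewrite ext_sgn_cross //; congr (_ * x _); apply/setP => z.
by rewrite !inE mem_cat !mem_enum.
Qed.

Lemma tens_coprod_f x u v : tens_coprod (f e x) u v = ftens e (ext_coprod e x) u v.
Proof.
move: u; apply: alternating_eq (alternating_catr v (alternating_f x)) _ _ => [|T].
  exact: alternating_ftensl.
move: v; apply: alternating_eq (alternating_catl _ (alternating_f x)) _ _ => [|T'].
  exact: alternating_ftensr.
by rewrite ftens_enum /gword -map_cat f_enum_cat.
Qed.

End MapF.

Theorem lemma5p5 (n : nat) (e : 'I_n -> nat)
    (he : forall i, (0 < e i)%N && ~~ odd (e i)) :
  (forall (x : ext n) (u v : word n),
      tens_coprod (f e x) u v = ftens e (ext_coprod e x) u v) /\
  (forall x : ext n, tens_counit (f e x) = ext_counit x) /\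
  (forall (x : ext n) (w : word n), bar_d e (f e x) w = f e (ext_d x) w) /\
  (forall (x y : ext n) (w : word n),
      f e (ext_mul e x y) w = shuffle e (f e x) (f e y) w) /\
  (forall w : word n, f e (ext_one n) w = tens_one w).
Proof.
split; first exact: tens_coprod_f.
split; first exact: tens_counit_f.
split; first exact: bar_d_f.
split; first exact: f_ext_mul.
exact: f_ext_one.
Qed.
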